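(* Let $\tau$ be a veering triangulation of $M$ with dual graph $\Gamma$. The homology classes of the $AB$-chains and the $AB$-cycles together generate $H_1(\Gamma;\mathbb{Z})$ (and hence their images generate $H_1(M;\mathbb{Z})$).
   Context: $\tau$ is a veering triangulation of $M$ (taut ideal triangulation with cooriented faces, each tetrahedron having two bottom and two top faces, a bottom edge, a top edge and four side edges, angle sum $2\pi$ around edges, with a consistent right/left veer on edges). Dual graph $\Gamma$: a vertex inside each tetrahedron and for each face a directed edge crossing it from the tetrahedron for which it is a top face to the one for which it is a bottom face. For a face $f$ with $t$ the tetrahedron having $f$ as bottom face, $A(f)$ is the top face of $t$ meeting $f$ along the edge of $t$ of the same veer as the top edge of $t$. A directed path in $\Gamma$ entering $t$ across $f$ and leaving across $f'$ makes an anti-branching turn at $t$ if $f'=A(f)$ and a branching turn otherwise. The $AB$-cycles are the directed cycles of $\Gamma$ making only anti-branching turns (equivalently the cycles of the permutation $A$). For a directed cycle $c$ with $k>0$ branching turns, its $AB$ decomposition is $c=(p_1,\dots,p_k)$, the directed paths obtained by cutting $c$ at its branching turns (so each $p_i$ has only anti-branching turns in its interior). $c$ is an $AB$-chain if (1) each $p_i$ is a proper subpath of an $AB$-cycle $c_i$, with $c_i\neq c_j$ for $i\neq j$, and (2) each endpoint of each $p_i$ is visited exactly once by $c$. *)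

(* Combinatorial model of a veering triangulation
   (Regina-style face gluings of oriented tetrahedra with vertices 'I_4),
   its dual graph Gamma, AB-cycles, AB-chains and H_1(Gamma; Z). *)
From mathcomp Require Import all_boot all_order all_algebra all_fingroup.
Set Implicit Arguments. Unset Strict Implicit. Unset Printing Implicit Defensive.
Import GRing.Theory Num.Theory.

(* Face i of a tetrahedron is the face opposite vertex i. *)
Record tri_data := TriData {
  tet : finType;
  (* face i of t is glued to face (gl t i).2 of tetrahedron (gl t i).1 *)
  gl : tet -> 'I_4 -> tet * 'I_4;
  (* vertex correspondence of this gluing (extended to a permutation of 'I_4,
     sending the opposite vertex i to the opposite vertex (gl t i).2) *)
  gp : tet -> 'I_4 -> {perm 'I_4};
  (* the two vertices spanning the top edge (top diagonal) of t; the bottom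
     edge is spanned by the two other vertices *)
  topv : tet -> {set 'I_4};
  (* veer of the edge {a,b} of t : true = right veering, false = left *)
  veer : tet -> 'I_4 -> 'I_4 -> bool
}.

Section Veering.
Variable V : tri_data.
Local Notation T := (tet V).

(* oriented edges (t,a,b) of the tetrahedra, identified through gluings *)
Definition oedge := (T * 'I_4 * 'I_4)%type.

Definition edge_step (x y : oedge) : bool :=
  let: (t, a, b) := x in let: (t', a', b') := y in
  [exists i : 'I_4, [&& a != b, i != a, i != b, (gl t i).1 == t',
                        gp t i a == a' & gp t i b == b']].

(* edges of angle pi (top and bottom diagonals) *)
Definition pi_edge (x : oedge) : bool :=
  let: (t, a, b) := x in (a != b) && ((a \in topv t) == (b \in topv t)).

Definition ideal_triangulation : Prop :=
  [/\ (forall (t : T) i, gl t i != (t, i)),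
      (forall (t : T) i, gl (gl t i).1 (gl t i).2 = (t, i)),
      (forall (t : T) i, gp t i i = (gl t i).2),
      (forall (t : T) i, gp (gl t i).1 (gl t i).2 = (gp t i)^-1%g) &
  (* manifold: no edge is identified with itself in reverse *)
      (forall (t : T) (a b : 'I_4), a != b -> ~~ connect edge_step (t, a, b) (t, b, a))].

(* M oriented: tetrahedra consistently oriented by their vertex labelling *)
Definition oriented : Prop := forall (t : T) i, odd_perm (gp t i).

Definition taut : Prop :=
  (* a top edge and the opposite bottom edge (the angle-pi edges);
     coorientations of faces agree (each face is a top face of one
     tetrahedron and a bottom face of the other); angle sum 2 pi
     around each edge *)
  [/\ (forall t : T, #|topv t| = 2),
      (forall (t : T) i, (i \in topv t) != ((gl t i).2 \in topv (gl t i).1)) &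
      (forall (t : T) (a b : 'I_4), a != b ->
          #|[set x | connect edge_step (t, a, b) x & pi_edge x]| = 2)].

Definition veering_cond : Prop :=
  (* veer is a well-defined function on the edges of M *)
  [/\ (forall (t : T) a b, veer t a b = veer t b a),
      (forall (t : T) i (a b : 'I_4), a != i -> b != i ->
          veer t a b = veer (gl t i).1 (gp t i a) (gp t i b)) &
  (* viewed from above, going anticlockwise from an endpoint of the top
     edge, the side edges are right, left, right, left.  With bottom edge
     {s0,s1}, top edge {s2,s3} and (s0,s1,s2,s3) positively oriented (an
     even permutation of (0,1,2,3)) this means: *)
      (forall (t : T) (s : {perm 'I_4}), ~~ odd_perm s ->
          s (inord 0) \notin topv t -> s (inord 1) \notin topv t ->
          s (inord 2) \in topv t -> s (inord 3) \in topv t ->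
          [/\ veer t (s (inord 0)) (s (inord 2)), veer t (s (inord 1)) (s (inord 3)),
              ~~ veer t (s (inord 0)) (s (inord 3)) & ~~ veer t (s (inord 1)) (s (inord 2))])].

Definition veering_triangulation : Prop :=
  [/\ ideal_triangulation, oriented, taut & veering_cond].

(* Dual graph Gamma.  Edges of Gamma = faces of the triangulation, each
   represented as (t,i) where face i of t is a bottom face of t. *)
Definition face := {x : T * 'I_4 | x.2 \in topv x.1}.

(* the face f is a bottom face of headT f, and a top face of tailT f;
   the directed edge f goes from tailT f to headT f *)
Definition headT (f : face) : T := (val f).1.
Definition tailT (f : face) : T := (gl (val f).1 (val f).2).1.
Definition tail_idx (f : face) : 'I_4 := (gl (val f).1 (val f).2).2.

(* Entering t = headT f across f and leaving across g makes an
   anti-branching turn iff g = A(f), i.e. g is the top face of t meeting f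
   along the (side) edge of t having the same veer as the top edge of t. *)
Definition ab_turn (f g : face) : bool :=
  let t := headT f in
  (tailT g == t) &&
  [exists x : 'I_4, exists y : 'I_4, exists u : 'I_4, exists v : 'I_4,
    [&& x != y, x \notin [:: (val f).2; tail_idx g], y \notin [:: (val f).2; tail_idx g],
        u != v, u \in topv t, v \in topv t & veer t x y == veer t u v]].

Definition adj (f g : face) : bool := tailT g == headT f.

Definition dcycle (c : seq face) : bool := (c != [::]) && path.cycle adj c.

(* AB-cycles: the directed cycles making only anti-branching turns, with no
   repeated edge, i.e. the cycles of the permutation A *)
Definition AB_cycle (c : seq face) : bool :=
  [&& c != [::], uniq c & path.cycle ab_turn c].

Definition same_cycle (c d : seq face) : Prop := exists r, rot r c = d.

Definition proper_subpath (p c : seq face) : bool :=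
  (0 < size p < size c) && [exists r : 'I_(size c), p == take (size p) (rot r c)].

Definition branch_join (p q : seq face) : bool :=
  match rev p, q with
  | x :: _, y :: _ => ~~ ab_turn x y
  | _, _ => false
  end.

(* ps is the AB decomposition of c (up to the choice of starting point):
   ps cuts c exactly at its branching turns *)
Definition AB_decomp (c : seq face) (ps : seq (seq face)) : Prop :=
  [/\ exists r, rot r c = flatten ps,
      ps != [::],
      all (fun p => p != [::]) ps,
      all (sorted ab_turn) ps &
      path.cycle branch_join ps].

Definition endpoints (p : seq face) : seq T :=
  [seq tailT x | x <- take 1 p] ++ [seq headT x | x <- take 1 (rev p)].

Definition AB_chain (c : seq face) : Prop :=
  dcycle c /\
  exists ps, [/\ AB_decomp c ps,
    (exists cs : seq (seq face),
       [/\ size cs = size ps, all AB_cycle cs, all2 proper_subpath ps cs &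
           forall i j, i < size cs -> j < size cs -> i != j ->
             ~ same_cycle (nth [::] cs i) (nth [::] cs j)]) &
    (* (2) : vertex visits of c = tetrahedra entered *)
    (forall p, p \in ps -> forall v, v \in endpoints p ->
        count_mem v [seq headT x | x <- c] = 1)].

(* homology class (in C_1(Gamma;Z) = Z^faces) of a directed cycle *)
Definition hclass (c : seq face) (f : face) : int := (count_mem f c)%:Z.

(* H_1(Gamma;Z) = ker (boundary : Z^edges -> Z^vertices) *)
Definition is_H1 (z : face -> int) : Prop :=
  forall t : T, (\sum_(f | headT f == t) z f = \sum_(f | tailT f == t) z f)%R.

End Veering.

(* Write A for the anti-branching successor on faces (edges of Gamma) and
   twin f for the other bottom face of the tetrahedron entered by f.  A local
   computation in one veering tetrahedron, put in standard position, shows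
   that A maps its two bottom faces bijectively onto its two top faces, so A
   is a permutation whose cycles are the AB-cycles.  For an integer 1-cycle z
   the defect z f - z (A f) is opposite at f and twin f.  If the defect
   vanishes, z is constant on A-orbits and is a combination of AB-cycles.
   Otherwise, following faces of nonzero defect along AB-cycles until an
   AB-cycle repeats gives a cyclic sequence of switches; joining the AB-paths
   between consecutive switches gives an AB-chain whose defect is supported
   on these switches and their twins.  Subtracting a multiple of it shrinks
   the support of the defect, and induction concludes. *)
From mathcomp Require Import all_boot all_order all_algebra all_fingroup.
From mathcomp Require Import zify ring.
Import GRing.Theory Num.Theory.

Set Implicit Arguments. Unset Strict Implicit. Unset Printing Implicit Defensive.

Lemma path_flatten (X : Type) (r : rel X) x0 (ps : seq (seq X)) p0 :
  all (fun p => ~~ nilp p) ps -> all (sorted r) ps ->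
  path (fun p q => r (last x0 p) (head x0 q)) p0 ps ->
  path r (last x0 p0) (flatten ps).
Proof.
elim: ps p0 => //= q qs IH p0 /andP [nq nqs] /andP [sq sqs] /andP [rq pq].
rewrite cat_path; case: q nq sq rq pq => //= y q' _ sq rq pq.
by rewrite rq sq; exact: (IH (y :: q')).
Qed.

Lemma cycle_flatten (X : Type) (r : rel X) x0 (ps : seq (seq X)) :
  all (fun p => ~~ nilp p) ps -> all (sorted r) ps ->
  path.cycle (fun p q => r (last x0 p) (head x0 q)) ps -> path.cycle r (flatten ps).
Proof.
move=> ne so; rewrite (cycle_path [::]) (cycle_path x0) => H.
have -> : last x0 (flatten ps) = last x0 (last [::] ps).
  elim/last_ind: ps ne {so H} => //= s x IH.
  rewrite all_rcons => /andP [nx _]; rewrite flatten_rcons last_cat last_rcons.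
  by case: x nx.
exact: path_flatten.
Qed.

Lemma cycle_iota (X : Type) (e : rel X) (G : nat -> X) m :
  0 < m -> (forall i, i < m -> e (G i) (G (i.+1 %% m))) ->
  path.cycle e [seq G i | i <- iota 0 m].
Proof.
case: m => // k _ H; rewrite (cycle_path (G 0)).
have -> : last (G 0) [seq G i | i <- iota 0 k.+1] = G k.
  by rewrite -nth_last size_map size_iota (nth_map 0) ?size_iota // nth_iota.
apply/(pathP (G 0)) => i; rewrite size_map size_iota => ik.
case: i ik => [|i] ik; first by have := H k (ltnSn k); rewrite modnn.
rewrite [nth _ (_ :: _) _]/= (nth_map 0) ?size_iota ?(ltnW ik) // nth_iota ?(ltnW ik) //.
rewrite (_ : G 0 :: _ = [seq G i | i <- iota 0 k.+1]) // (nth_map 0) ?size_iota ?(ltnW ik) //.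
by rewrite nth_iota ?(ltnW ik) //; have := H i (ltnW ik); rewrite modn_small.
Qed.

Lemma all2_map_iota (X Y : Type) (r : X -> Y -> bool) (G : nat -> X) (H : nat -> Y) m :
  (forall i, i < m -> r (G i) (H i)) ->
  all2 r [seq G i | i <- iota 0 m] [seq H i | i <- iota 0 m].
Proof.
move=> Hr; have : {in iota 0 m, forall i, r (G i) (H i)}.
  by move=> i; rewrite mem_iota => /andP [_]; apply: Hr.
elim: (iota 0 m) => //= a s IH Has.
by rewrite Has ?mem_head //= IH // => i si; apply: Has; rewrite inE si orbT.
Qed.

Lemma sum_rot (R : nmodType) (G : nat -> R) m : 0 < m ->
  (\sum_(i < m) G (i.+1 %% m)%N = \sum_(i < m) G i)%R.
Proof.
case: m => // k _; rewrite big_ord_recr big_ord_recl /= modnn addrC; congr (_ + _)%R.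
by apply: eq_bigr => i _; rewrite modn_small ?ltnS.
Qed.

Lemma first_repeat (X : finType) (R : nat -> X) : exists J K,
  [/\ J < K, R J = R K & forall a b, J < a -> a < b -> b <= K -> R a != R b].
Proof.
pose repeats K := R K \in [seq R i | i <- iota 0 K].
have repeatsP a b : a < b -> R a = R b -> repeats b.
  by move=> ab E; rewrite /repeats -E map_f // mem_iota.
have [K0 rep0] : exists K, repeats K.
  have /(uniqPn (R 0)) [a [b [ab]]] : ~~ uniq [seq R i | i <- iota 0 #|X|.+1].
    apply/negP => /uniq_leq_size /(_ (fun x _ => mem_enum predT x)).
    by rewrite size_map size_iota -cardT ltnn.
  rewrite size_map size_iota => bX.
  rewrite !(nth_map 0) ?size_iota ?(ltn_trans ab) // !nth_iota ?(ltn_trans ab) //.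
  by exists b; apply: (repeatsP a).
have [K /mapP [J]] := ex_minnP (ex_intro repeats K0 rep0).
rewrite mem_iota add0n => /andP [_ JK] RJK minK; exists J, K; split => // a b Ja ab bK.
apply/eqP => Rab; case: (ltngtP b K) bK => // [bK _ | bK _].
  by have := minK b (repeatsP a b ab Rab); rewrite leqNgt bK.
have RJa : R J = R a by rewrite Rab bK RJK.
by have := minK a (repeatsP J a Ja RJa); rewrite leqNgt -bK ab.
Qed.

(* The vertices 0, 1, 2, 3 of a tetrahedron, as closed terms that compute. *)
Definition o0 : 'I_4 := @Ordinal 4 0 isT.
Definition o1 : 'I_4 := @Ordinal 4 1 isT.
Definition o2 : 'I_4 := @Ordinal 4 2 isT.
Definition o3 : 'I_4 := @Ordinal 4 3 isT.

Lemma ord4P (i : 'I_4) : [\/ i = o0, i = o1, i = o2 | i = o3].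
Proof.
case: i => -[|[|[|[|//]]]] H;
  [constructor 1 | constructor 2 | constructor 3 | constructor 4]; exact: val_inj.
Qed.

(* The veering condition names vertices by inord; identify them with o0..o3. *)
Lemma inord4E : ((inord 0 = o0 :> 'I_4) * (inord 1 = o1 :> 'I_4))
  * ((inord 2 = o2 :> 'I_4) * (inord 3 = o3 :> 'I_4)).
Proof. by do !split; apply: val_inj; rewrite /= inordK. Qed.

Lemma exists_ord4 (P : pred 'I_4) : [exists x, P x] = [|| P o0, P o1, P o2 | P o3].
Proof.
apply/existsP/idP => [[x Px]|]; last by case/or4P => H; eexists; exact: H.
by have [E|E|E|E] := ord4P x; rewrite E in Px; rewrite Px ?orbT.
Qed.

(* ab_pair S v i q: in a tetrahedron with top edge spanned by S and edge
   veers v, the edge shared by the faces opposite i and q (spanned by the two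
   remaining vertices) has the veer of the top edge.  For i a top vertex
   (bottom face i) and q a bottom vertex (top face q), this is exactly the
   anti-branching condition defining ab_turn. *)
Definition ab_pair (S : {set 'I_4}) (v : 'I_4 -> 'I_4 -> bool) (i q : 'I_4) : bool :=
  [exists x : 'I_4, exists y : 'I_4, exists u : 'I_4, exists w : 'I_4,
    [&& x != y, x \notin [:: i; q], y \notin [:: i; q],
        u != w, u \in S, w \in S & v x y == v u w]].

Lemma ab_pair_ext S v1 v2 i q : (forall x y, x != y -> v1 x y = v2 x y) ->
  ab_pair S v1 i q = ab_pair S v2 i q.
Proof.
move=> Ev; do 4 apply: eq_existsb => ?.
by case: eqVneq => //= xy; case: eqVneq => //= uw; rewrite !Ev.
Qed.

Lemma ab_pair_relabel (s : {perm 'I_4}) (S S' : {set 'I_4}) v i q :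
  (forall x, (s x \in S) = (x \in S')) ->
  ab_pair S v (s i) (s q) = ab_pair S' (fun x y => v (s x) (s y)) i q.
Proof.
move=> memS.
have ex (P : pred 'I_4) : [exists x, P x] = [exists x, P (s x)].
  apply/existsP/existsP => [[x Px]|[x Px]]; last by exists (s x).
  by exists (s^-1 x)%g; rewrite permKV.
rewrite /ab_pair; do 4 (rewrite ex; apply: eq_existsb => ?).
by rewrite !inE !(inj_eq (@perm_inj _ s)) !memS.
Qed.

(* The standard veering tetrahedron: bottom edge {0,1}, top edge {2,3},
   (0,1,2,3) positively oriented, so the side edges {0,2} and {1,3} are
   right veering and {0,3}, {1,2} left veering; b and g are the veers of the
   top and bottom edges. *)
Definition std_top : {set 'I_4} := [set o2; o3].

Definition std_veer (b g : bool) (x y : 'I_4) : bool :=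
  match val x, val y with
  | 0, 2 | 2, 0 | 1, 3 | 3, 1 => true
  | 0, 3 | 3, 0 | 1, 2 | 2, 1 => false
  | 2, 3 | 3, 2 => b
  | _, _ => g
  end.

(* In the standard tetrahedron the bottom face i is anti-branching
   followed by the top face std_partner b i. *)
Definition std_partner (b : bool) (i : 'I_4) : 'I_4 := if b == (i == o2) then o0 else o1.

Lemma ab_pair_std b g i q : i \in std_top -> q \notin std_top ->
  ab_pair std_top (std_veer b g) i q = (q == std_partner b i).
Proof.
rewrite /ab_pair /std_top !exists_ord4 !inE => Hi Hq.
have [Ei|Ei|Ei|Ei] := ord4P i; rewrite Ei in Hi * => //;
have [Eq|Eq|Eq|Eq] := ord4P q; rewrite Eq in Hq * => //;
by case: b; case: g.
Qed.

Lemma std_partner_bottom b i : std_partner b i \notin std_top.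
Proof. by rewrite /std_partner !inE; case: ifP. Qed.

Lemma std_partner_inj b : {in std_top &, injective (std_partner b)}.
Proof.
move=> i j; rewrite !inE /std_partner.
by case/orP => /eqP ->; case/orP => /eqP ->; case: b.
Qed.

Lemma std_position (S : {set 'I_4}) : #|S| = 2 ->
  exists2 s : {perm 'I_4}, ~~ odd_perm s & forall x, (s x \in S) = (x \in std_top).
Proof.
move=> cS; have /cards2P [a [b [ab ES]]] : #|S| == 2 by rewrite cS.
have /cards2P [c [d [cd EC]]] : #|~: S| == 2.
  by have := cardsC S; rewrite card_ord cS => H; apply/eqP; lia.
have aS : a \in S by rewrite ES !inE eqxx.
have bS : b \in S by rewrite ES !inE eqxx orbT.
have cS' : c \notin S by rewrite -in_setC EC !inE eqxx.
have dS' : d \notin S by rewrite -in_setC EC !inE eqxx orbT.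
have out_in x y : x \in S -> y \notin S -> y != x by move=> xS; apply: contraNneq => ->.
have U : uniq [:: c; d; a; b].
  by rewrite /= !inE !negb_or cd ab !out_in.
pose f (i : 'I_4) := nth c [:: c; d; a; b] i.
have f_inj : injective f by move=> i j /eqP; rewrite /f nth_uniq // => /eqP/val_inj.
have memf x : (f x \in S) = (x \in std_top).
  by rewrite !inE; have [->|->|->|->] := ord4P x; rewrite /f /= ?aS ?bS ?(negbTE cS') ?(negbTE dS').
pose s1 := perm f_inj.
case Hodd: (odd_perm s1); last by exists s1; rewrite ?Hodd // => x; rewrite permE.
exists (tperm o0 o1 * s1)%g; first by rewrite odd_permM odd_tperm Hodd.
move=> x; rewrite permM permE memf !inE.
by have [->|->|->|->] := ord4P x; rewrite ?tpermL ?tpermR ?tpermD.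
Qed.

Section VeeringTetrahedron.
Variables (S : {set 'I_4}) (v : 'I_4 -> 'I_4 -> bool).
Hypotheses (S2 : #|S| = 2) (v_sym : forall a b, v a b = v b a)
  (v_alt : forall s : {perm 'I_4}, ~~ odd_perm s ->
          s (inord 0) \notin S -> s (inord 1) \notin S ->
          s (inord 2) \in S -> s (inord 3) \in S ->
          [/\ v (s (inord 0)) (s (inord 2)), v (s (inord 1)) (s (inord 3)),
              ~~ v (s (inord 0)) (s (inord 3)) & ~~ v (s (inord 1)) (s (inord 2))]).

Lemma veer_std : exists s : {perm 'I_4}, exists b g,
  (forall x, (s x \in S) = (x \in std_top)) /\
  (forall x y, x != y -> v (s x) (s y) = std_veer b g x y).
Proof.
have [s even_s memS] := std_position S2.
have [||||] := v_alt even_s; rewrite ?inord4E ?memS ?inE ?eqxx ?orbT //.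
move=> v02 v13 v03 v12.
exists s, (v (s o2) (s o3)), (v (s o0) (s o1)); split=> // x y.
have [->|->|->|->] := ord4P x; have [->|->|->|->] := ord4P y => //= _;
by rewrite /std_veer /= ?(v_sym (s o2)) ?(v_sym (s o3)) ?(v_sym (s o1) (s o0))
  ?v02 ?v13 ?(negbTE v03) ?(negbTE v12).
Qed.

Lemma tet_partner : exists h : 'I_4 -> 'I_4,
  [/\ {in S, forall i, h i \notin S}, {in S &, injective h} &
      {in S, forall i q, q \notin S -> ab_pair S v i q = (q == h i)}].
Proof.
have [s [b [g [memS vE]]]] := veer_std.
have memS' x : (x \in S) = ((s^-1)%g x \in std_top) by rewrite -memS permKV.
exists (fun i => s (std_partner b ((s^-1)%g i))); split.
- by move=> i _; rewrite memS std_partner_bottom.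
- move=> i j iS jS /perm_inj /std_partner_inj; rewrite -!memS' => /(_ iS jS).
  exact: perm_inj.
move=> i iS q qS; rewrite -(permKV s i) -(permKV s q) (ab_pair_relabel _ _ _ memS).
rewrite (ab_pair_ext _ _ _ vE) ab_pair_std -?memS' // !permKV.
by rewrite -(inj_eq (@perm_inj _ s)) permKV.
Qed.

End VeeringTetrahedron.

Section DualGraph.
Variable V : tri_data.
Hypothesis HV : veering_triangulation V.
Local Notation F := (face V).
Local Notation T := (tet V).

Lemma glK (t : T) i : gl (gl t i).1 (gl t i).2 = (t, i).
Proof. by case: HV => [[_ H _ _ _]] _ _ _; exact: H. Qed.

Lemma top_flip (t : T) i : (i \in topv t) != ((gl t i).2 \in topv (gl t i).1).
Proof. by case: HV => _ _ [_ H _] _; exact: H. Qed.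

Lemma tet_partner_at (t : T) : exists h : 'I_4 -> 'I_4,
  [/\ {in topv t, forall i, h i \notin topv t}, {in topv t &, injective h} &
      {in topv t, forall i q, q \notin topv t -> ab_pair (topv t) (veer t) i q = (q == h i)}].
Proof.
case: HV => _ _ [S2 _ _] [v_sym _ v_alt].
exact: (tet_partner (S2 t) (v_sym t) (v_alt t)).
Qed.

(* As an edge of Gamma, f enters headT f across its bottom face (val f).2,
   and leaves tailT f across its top face tail_idx f. *)
Lemma face_top (f : F) : (val f).2 \in topv (headT f).
Proof. exact: valP f. Qed.

Lemma tail_bottom (g : F) : tail_idx g \notin topv (tailT g).
Proof. by have := top_flip (val g).1 (val g).2; rewrite (valP g). Qed.

Lemma face_out (t : T) q : q \notin topv t -> exists g : F, tailT g = t /\ tail_idx g = q.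
Proof.
move=> qS; have H : (gl t q).2 \in topv (gl t q).1.
  by move: (top_flip t q); rewrite (negbTE qS); case: (_ \in topv _).
by exists (exist _ (gl t q) H); rewrite /tailT /tail_idx /= glK.
Qed.

Lemma face_out_inj (g1 g2 : F) : tailT g1 = tailT g2 -> tail_idx g1 = tail_idx g2 -> g1 = g2.
Proof.
have gl_tail (g : F) : gl (tailT g) (tail_idx g) = val g.
  by case: g => [[t i] Hi]; rewrite /tailT /tail_idx /= glK.
by move=> E1 E2; apply: val_inj; rewrite -gl_tail E1 E2 gl_tail.
Qed.

Lemma ab_turnE (f g : F) : ab_turn f g =
  (tailT g == headT f) && ab_pair (topv (headT f)) (veer (headT f)) (val f).2 (tail_idx g).
Proof. by []. Qed.

Lemma ab_turn_ex (f : F) : exists g, ab_turn f g.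
Proof.
have [h [h_bot _ hE]] := tet_partner_at (headT f).
have [g [tg ig]] := face_out (h_bot _ (face_top f)).
exists g; rewrite ab_turnE tg eqxx ig hE ?eqxx // ?face_top //.
exact: h_bot (face_top f).
Qed.

Lemma ab_turn_uniq (f g1 g2 : F) : ab_turn f g1 -> ab_turn f g2 -> g1 = g2.
Proof.
have [h [_ _ hE]] := tet_partner_at (headT f).
have idx (g : F) : ab_turn f g -> tailT g = headT f /\ tail_idx g = h (val f).2.
  rewrite ab_turnE => /andP [/eqP tg].
  have gS : tail_idx g \notin topv (headT f) by rewrite -tg tail_bottom.
  by rewrite hE ?face_top // => /eqP.
move=> /idx [t1 i1] /idx [t2 i2].
by apply: face_out_inj; rewrite ?t1 ?t2 ?i1 ?i2.
Qed.

Definition A (f : F) : F := odflt f [pick g | ab_turn f g].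

Lemma ab_turnP (f g : F) : ab_turn f g = (g == A f).
Proof.
have abA : ab_turn f (A f).
  rewrite /A; case: pickP => [//|H].
  by have [g0] := ab_turn_ex f; rewrite H.
by apply/idP/eqP => [H|->]; [exact: ab_turn_uniq H abA | exact: abA].
Qed.

Lemma tail_A (f : F) : tailT (A f) = headT f.
Proof. by have := eqxx (A f); rewrite -ab_turnP ab_turnE => /andP [/eqP]. Qed.

Lemma top_card (t : T) : #|topv t| = 2.
Proof. by case: HV => _ _ [S2 _ _] _; exact: S2. Qed.

(* twin f: the other bottom face of the tetrahedron entered by f. *)
Definition twin (f : F) : F :=
  insubd f ((val f).1, odflt (val f).2 [pick j in topv (val f).1 | j != (val f).2]).

Lemma twin_val (f : F) :
  exists2 j, val (twin f) = (headT f, j) & j \in topv (headT f) /\ j != (val f).2.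
Proof.
rewrite /twin; case: pickP => [j /andP [jS ji]|none].
  by exists j; rewrite ?val_insubd /= ?jS.
exfalso; have /eqP/cards2P [a [b [ab E]]] := top_card (headT f).
have := face_top f; rewrite E !inE => /orP [] /eqP ei.
  by have := none b; rewrite /headT E !inE eqxx orbT ei eq_sym ab.
by have := none a; rewrite /headT E !inE eqxx ei ab.
Qed.

Lemma head_twin (f : F) : headT (twin f) = headT f.
Proof. by have [j E _] := twin_val f; rewrite /headT E. Qed.

Lemma twin_neq (f : F) : twin f != f.
Proof.
apply/eqP => E; have [j Ev [_ /eqP []]] := twin_val f.
by rewrite -{1}E Ev.
Qed.

Lemma bottom_faces (f g : F) : headT g = headT f -> g = f \/ g = twin f.
Proof.
move=> hg; have [j Ev [jS ji]] := twin_val f.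
have gS : (val g).2 \in topv (headT f) by rewrite -hg face_top.
have /eqP/cards2P [a [b [ab E]]] := top_card (headT f).
case: (eqVneq (val g).2 (val f).2) => e; [left | right]; apply: val_inj.
  by rewrite [val g]surjective_pairing [val f]surjective_pairing e; congr pair.
rewrite Ev [val g]surjective_pairing; congr pair; first exact: hg.
move: (face_top f) gS jS e ji; rewrite E !inE.
by do 3 case/orP => /eqP ->; rewrite ?eqxx // eq_sym ?(negbTE ab).
Qed.

Lemma twinK (f : F) : twin (twin f) = f.
Proof.
have h : headT (twin (twin f)) = headT f by rewrite !head_twin.
case: (bottom_faces h) => // E.
by have := twin_neq (twin f); rewrite E eqxx.
Qed.

(* A is a permutation: the two bottom faces of a tetrahedron are sent to
   its two distinct top faces.  Its cycles are the AB-cycles. *)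
Lemma A_inj : injective A.
Proof.
move=> f1 f2 E; have h : headT f2 = headT f1 by rewrite -!tail_A E.
case: (bottom_faces h) => // E2; exfalso.
have [hp [hp_bot hp_inj hpE]] := tet_partner_at (headT f1).
have [j Ev [jS ji]] := twin_val f1.
have idx (f : F) : headT f = headT f1 -> tail_idx (A f) = hp (val f).2.
  move=> hf; have bot : tail_idx (A f) \notin topv (headT f1) by rewrite -hf -tail_A tail_bottom.
  have top : (val f).2 \in topv (headT f1) by rewrite -hf face_top.
  by have := eqxx (A f); rewrite -ab_turnP ab_turnE hf hpE // => /andP [_ /eqP].
have := idx _ h; rewrite -E idx // E2 Ev => /hp_inj; rewrite jS face_top => /(_ isT isT).
by move=> E1; move: ji; rewrite E1 eqxx.
Qed.

End DualGraph.

Section Defect.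
Variable V : tri_data.
Hypothesis HV : veering_triangulation V.
Local Notation F := (face V).
Local Notation A := (@A V).
Local Notation Aorbit := (fingraph.orbit A).
Local Open Scope ring_scope.

Lemma A_fconnect_sym : connect_sym (frel A).
Proof. exact: fconnect_sym (A_inj HV). Qed.

Lemma AB_cycle_orbit (f : F) : AB_cycle (Aorbit f).
Proof.
apply/and3P; split; [|exact: fingraph.orbit_uniq|].
  by apply/eqP => E; have := fingraph.in_orbit A f; rewrite E.
apply: sub_cycle (cycle_orbit (A_inj HV) f) => a b /eqP <-.
by rewrite (ab_turnP HV) eqxx.
Qed.

Definition defect (z : F -> int) (f : F) : int := z f - z (A f).

Definition AB_expansion (l : seq (int * seq F)) (z : F -> int) : Prop :=
  (forall x, x \in l -> AB_chain x.2 \/ AB_cycle x.2) /\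
  (forall f, z f = \sum_(x <- l) x.1 * hclass x.2 f).

(* A chain with zero defect is constant on A-orbits, hence a combination of
   AB-cycles. *)
Lemma AB_cycles_span (z : F -> int) : (forall f, defect z f = 0) ->
  exists l, AB_expansion l z.
Proof.
move=> z0; have zA f g : fconnect A f g -> z f = z g.
  move/iter_findex => <-; elim: (findex _ f g) => //= n ->.
  by apply/eqP; rewrite -subr_eq0 -/(defect z _) z0.
exists [seq (z r, Aorbit r) | r <- enum (froots A)]; split.
  by move=> x /mapP [r _ ->]; right; exact: AB_cycle_orbit.
have hclass_orbit r f : hclass (Aorbit r) f = (fconnect A r f)%:Z.
  by rewrite /hclass count_uniq_mem ?fingraph.orbit_uniq // -fconnect_orbit.
move=> f; rewrite big_map (bigD1_seq (froot A f)) ?enum_uniq //; last first.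
  by rewrite mem_enum; exact: roots_root A_fconnect_sym f.
rewrite big1_seq /= ?addr0.
  rewrite hclass_orbit (A_fconnect_sym (froot A f) f) connect_root mulr1.
  by apply: zA; rewrite connect_root.
move=> r /andP [rf]; rewrite mem_enum => /eqP rr; rewrite hclass_orbit.
case E: (fconnect A r f); last by rewrite mulr0.
by move: rf; rewrite -rr (fingraph.rootP A_fconnect_sym E) eqxx.
Qed.

(* The cycle condition at headT f, whose incoming faces are f, twin f and
   outgoing faces A f, A (twin f), says that the defects at f and twin f are
   opposite. *)
Lemma defect_twin (z : F -> int) : is_H1 z -> forall f, defect z (twin f) = - defect z f.
Proof.
move=> hz f; have := hz (headT f).
have hp := head_twin HV f; have pn := twin_neq HV f.
rewrite (bigD1 f) //= (bigD1 (twin f)) /=; last by rewrite hp eqxx pn.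
rewrite big1; last first.
  move=> g /andP [/andP [/eqP hg gf] gpf].
  by case: (bottom_faces HV hg) => E; rewrite E eqxx in gf gpf.
rewrite (bigD1 (A f)) /=; last by rewrite (tail_A HV).
rewrite (bigD1 (A (twin f))) /=; last by rewrite (tail_A HV) hp eqxx (inj_eq (A_inj HV)) pn.
rewrite big1; last first.
  move=> g /andP [/andP [/eqP hg gf] gpf].
  have [Ai K1 K2] := injF_bij (A_inj HV).
  move: hg gf gpf; rewrite -(K2 g) (tail_A HV) => hg.
  by case: (bottom_faces HV hg) => ->; rewrite eqxx.
by rewrite !addr0 /defect => E; lia.
Qed.

Lemma sum_defect_orbit (z : F -> int) (f : F) : \sum_(g <- Aorbit f) defect z g = 0.
Proof.
have orbitA : perm_eq (map A (Aorbit f)) (Aorbit f).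
  apply: uniq_perm; rewrite ?(map_inj_uniq (A_inj HV)) ?fingraph.orbit_uniq // => g.
  apply/mapP/idP => [[h hf ->]|gf]; first exact: fingraph.mem_orbit.
  exists (finv A g); last by rewrite f_finv //; exact: A_inj.
  rewrite -fconnect_orbit; apply: connect_trans (fconnect_finv A g).
  by rewrite fconnect_orbit.
rewrite big_split /= sumrN -(big_map A predT z) (perm_big _ orbitA).
exact: subrr.
Qed.

Definition twin_antisym (z : F -> int) : Prop := forall f, defect z (twin f) = - defect z f.

(* If defect z e <> 0, then twin e has the opposite nonzero defect; as
   defects sum to zero along the AB-cycle of twin e, that cycle carries
   another face with nonzero defect, the next switch after e. *)
Definition next_switch (z : F -> int) (e : F) : F :=
  odflt e [pick g | [&& g \in Aorbit (twin e), g != twin e & defect z g != 0]].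

Lemma next_switchP (z : F -> int) (e : F) : twin_antisym z -> defect z e != 0 ->
  [/\ fconnect A (twin e) (next_switch z e), next_switch z e != twin e &
      defect z (next_switch z e) != 0].
Proof.
move=> Hz ze; rewrite /next_switch; case: pickP => [g /and3P [go gp sg]|none].
  by rewrite fconnect_orbit.
have zt : defect z (twin e) != 0 by rewrite Hz oppr_eq0.
have := sum_defect_orbit z (twin e).
rewrite (bigD1_seq (twin e)) ?fingraph.in_orbit ?fingraph.orbit_uniq //= big1_seq ?addr0.
  by move/eqP; rewrite (negbTE zt).
by move=> g /andP [gp go]; have /negbT := none g; rewrite go gp negbK => /eqP.
Qed.

End Defect.

(* The chain enters the
   tetrahedron headT (w i) through w i, turns (branching) onto A (twin (w i)),
   and follows the AB-cycle of twin (w i) until it enters through w (i+1). *)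
Section SwitchCycle.
Variable V : tri_data.
Hypothesis HV : veering_triangulation V.
Local Notation F := (face V).
Local Notation A := (@A V).
Local Notation Aorbit := (fingraph.orbit A).

Definition switch_cycle (m : nat) (w : nat -> F) : Prop :=
  [/\ 0 < m,
      forall i, i < m -> fconnect A (twin (w i)) (w (i.+1 %% m)),
      forall i, i < m -> w (i.+1 %% m) != twin (w i) &
      forall i j, i < m -> j < m -> fconnect A (twin (w i)) (twin (w j)) -> i = j].

Variables (m : nat) (w : nat -> F).
Hypotheses (m_gt0 : 0 < m)
  (w_next : forall i, i < m -> fconnect A (twin (w i)) (w (i.+1 %% m)))
  (w_new : forall i, i < m -> w (i.+1 %% m) != twin (w i))
  (w_distinct : forall i j, i < m -> j < m ->
     fconnect A (twin (w i)) (twin (w j)) -> i = j).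

Local Notation nx i := (i.+1 %% m).

Definition seg_start (i : nat) : F := A (twin (w i)).
Definition seg_len (i : nat) : nat := findex A (seg_start i) (w (nx i)).
Definition seg (i : nat) : seq F := traject A (seg_start i) (seg_len i).+1.
Definition segs : seq (seq F) := [seq seg i | i <- iota 0 m].
Definition chain : seq F := flatten segs.

Let injA := A_inj HV.
Let symA := A_fconnect_sym HV.

Lemma nx_lt i : nx i < m. Proof. exact: ltn_pmod. Qed.

Lemma seg_start_connect i : i < m -> fconnect A (seg_start i) (w (nx i)).
Proof. by move=> im; apply: connect_trans (w_next im); rewrite symA fconnect1. Qed.

Lemma seg_end i : i < m -> iter (seg_len i) A (seg_start i) = w (nx i).
Proof. by move=> im; rewrite iter_findex // seg_start_connect. Qed.

(* A segment is a proper part of its AB-cycle: it avoids twin (w i). *)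
Lemma seg_short i : i < m -> (seg_len i).+1 < fingraph.order A (twin (w i)).
Proof.
move=> im; have lo := findex_max (seg_start_connect im).
rewrite (order_id_cycle (cycle_orbit injA _)) // in lo.
rewrite ltn_neqAle lo andbT; apply/eqP => E; move: (w_new im).
by rewrite -seg_end // /seg_start -iterSr E iter_order // eqxx.
Qed.

Lemma seg_on_cycle i g : g \in seg i -> fconnect A (twin (w i)) g.
Proof. by case/trajectP => k _ ->; apply: connect_trans (fconnect1 _ _) (fconnect_iter _ _ _). Qed.

Lemma seg_uniq i : i < m -> uniq (seg i).
Proof.
move=> im; rewrite /seg -(@take_traject _ _ (fingraph.order A (seg_start i))).
  exact/take_uniq/fingraph.orbit_uniq.
by rewrite (order_id_cycle (cycle_orbit injA _)) // ltnW // seg_short.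
Qed.

Lemma seg_has_next i : i < m -> w (nx i) \in seg i.
Proof. by move=> im; apply/trajectP; exists (seg_len i); rewrite ?seg_end. Qed.

Lemma twin_notin_seg i : i < m -> twin (w i) \notin seg i.
Proof.
move=> im; apply/negP => /trajectP [k kl E].
have ko : k.+1 < fingraph.order A (twin (w i)) by apply: leq_ltn_trans (seg_short im).
by have := findex_iter ko; rewrite iterSr -/(seg_start i) -E findex0.
Qed.

Lemma seg_head i : seg i = seg_start i :: traject A (A (seg_start i)) (seg_len i).
Proof. by rewrite /seg trajectS. Qed.

Lemma seg_rcons i :
  seg i = rcons (traject A (seg_start i) (seg_len i)) (iter (seg_len i) A (seg_start i)).
Proof. by rewrite /seg trajectSr. Qed.

Lemma mem_chain i g : i < m -> g \in seg i -> g \in chain.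
Proof. by move=> im gs; apply/flattenP; exists (seg i); rewrite // map_f // mem_iota. Qed.

Lemma count_chain g : count_mem g chain = (\sum_(i < m) count_mem g (seg i))%N.
Proof.
rewrite /chain count_flatten sumnE /segs -map_comp big_map.
by rewrite -(big_mkord xpredT (fun i => count_mem g (seg i))) /index_iota subn0.
Qed.

Lemma tail_seg_start i : tailT (seg_start i) = headT (w i).
Proof. by rewrite /seg_start (tail_A HV) (head_twin HV). Qed.

Lemma chain_dcycle : dcycle chain.
Proof.
apply/andP; split.
  by apply/eqP => E; have := mem_chain m_gt0 (seg_has_next m_gt0); rewrite E.
apply: (@cycle_flatten _ _ (w 0)).
- by apply/allP => s /mapP [i _ ->].
- apply/allP => s /mapP [i _ ->]; rewrite /seg /=.
  by apply: sub_path (fpath_traject _ _ _) => a b /eqP <-; rewrite /adj (tail_A HV) eqxx.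
apply: cycle_iota => // i im.
rewrite [in X in last _ X]seg_rcons last_rcons seg_end // [in X in head _ X]seg_head /=.
by rewrite /adj tail_seg_start.
Qed.

Lemma chain_decomp : AB_decomp chain segs.
Proof.
split.
- by exists 0; rewrite rot0.
- apply/eqP => E; have : seg 0 \in segs by apply/mapP; exists 0; rewrite ?mem_iota.
  by rewrite E.
- by apply/allP => s /mapP [i _ ->].
- apply/allP => s /mapP [i _ ->]; rewrite /seg /=.
  by apply: sub_path (fpath_traject _ _ _) => a b /eqP <-; rewrite (ab_turnP HV) eqxx.
apply: cycle_iota => // i im.
rewrite /branch_join [in rev _]seg_rcons rev_rcons seg_end //=.
by rewrite (ab_turnP HV) /seg_start (inj_eq injA) (twin_neq HV).
Qed.

Lemma proper_seg i : i < m -> proper_subpath (seg i) (Aorbit (twin (w i))).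
Proof.
move=> im; have short := seg_short im.
apply/andP; split; first by rewrite size_traject fingraph.size_orbit short.
have h1 : 1 < size (Aorbit (twin (w i))) by rewrite fingraph.size_orbit (leq_ltn_trans _ short).
apply/existsP; exists (Ordinal h1) => /=.
rewrite size_traject /fingraph.orbit -orderSpred trajectS rot1_cons -cats1 takel_cat.
  by rewrite take_traject // -ltnS orderSpred.
by rewrite size_traject -ltnS orderSpred.
Qed.

Definition seg_cycles : seq (seq F) := [seq Aorbit (twin (w i)) | i <- iota 0 m].

Lemma chain_cycles :
  [/\ size seg_cycles = size segs, all (@AB_cycle V) seg_cycles,
      all2 (@proper_subpath V) segs seg_cycles &
      forall i j, i < size seg_cycles -> j < size seg_cycles -> i != j ->
        ~ same_cycle (nth [::] seg_cycles i) (nth [::] seg_cycles j)].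
Proof.
split.
- by rewrite !size_map.
- by apply/allP => s /mapP [i _ ->]; exact: AB_cycle_orbit.
- exact: all2_map_iota proper_seg.
move=> i j; rewrite size_map size_iota => im jm ij [r E].
rewrite !(nth_map 0) ?size_iota // !nth_iota // !add0n in E.
have : twin (w j) \in rot r (Aorbit (twin (w i))) by rewrite E fingraph.in_orbit.
rewrite mem_rot -fconnect_orbit => /(w_distinct im jm) eij.
by move: ij; rewrite eij eqxx.
Qed.

Lemma endpoints_seg i : i < m -> endpoints (seg i) = [:: headT (w i); headT (w (nx i))].
Proof.
move=> im; rewrite /endpoints [in take 1 (rev _)]seg_rcons rev_rcons seg_end //=.
by rewrite !take0 tail_seg_start.
Qed.

Lemma count_twin j : j < m -> count_mem (twin (w j)) chain = 0.
Proof.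
move=> jm; apply/count_memPn/negP => /flattenP [s /mapP [i im ->]] Hs.
move: im; rewrite mem_iota add0n => /andP [_ im].
have eij := w_distinct im jm (seg_on_cycle Hs).
by rewrite eij (negbTE (twin_notin_seg jm)) in Hs.
Qed.

Lemma count_switch j : j < m -> count_mem (w j) chain = 1.
Proof.
move=> jm; pose i0 := if j is j'.+1 then j' else m.-1.
have i0m : i0 < m by rewrite /i0; case: j jm {i0} => [|j'] /=; lia.
have ni0 : nx i0 = j.
  rewrite /i0; case: j jm {i0 i0m} => [|j'] jm; first by rewrite prednK // modnn.
  by rewrite modn_small.
rewrite count_chain (bigD1 (Ordinal i0m)) // big1 ?addn0.
  have H := seg_has_next i0m; rewrite ni0 in H.
  by rewrite count_uniq_mem ?H ?seg_uniq.
move=> i ne; apply/count_memPn/negP => Hs.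
have c := w_next i0m; rewrite ni0 symA in c.
have eii := w_distinct (ltn_ord i) i0m (connect_trans (seg_on_cycle Hs) c).
by move: ne; rewrite (_ : i = Ordinal i0m) ?eqxx //; apply: val_inj.
Qed.

(* Condition (2): the chain enters each headT (w j) exactly once, through
   w j, never through twin (w j). *)
Lemma chain_visits_once j : j < m -> count_mem (headT (w j)) [seq headT x | x <- chain] = 1.
Proof.
move=> jm; rewrite count_map.
rewrite (eq_count (a2 := predU (pred1 (w j)) (pred1 (twin (w j))))); last first.
  move=> x /=; apply/eqP/orP => [E|[/eqP->|/eqP->]] //; last by rewrite (head_twin HV).
  by case: (bottom_faces HV E) => ->; [left|right].
have := count_predUI (pred1 (w j)) (pred1 (twin (w j))) chain.
rewrite (eq_count (a1 := predI _ _) (a2 := pred0)) ?count_pred0; last first.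
  move=> x /=; apply/andP => -[/eqP -> /eqP E].
  by move: (twin_neq HV (w j)); rewrite -E eqxx.
by rewrite addn0 => ->; rewrite count_switch // count_twin.
Qed.

Lemma chain_AB : AB_chain chain.
Proof.
split; first exact: chain_dcycle.
exists segs; split; first exact: chain_decomp.
  by exists seg_cycles; exact: chain_cycles.
move=> s /mapP [i]; rewrite mem_iota add0n => /andP [_ im] -> v.
by rewrite endpoints_seg // !inE => /orP [] /eqP ->; rewrite chain_visits_once ?nx_lt.
Qed.

Local Open Scope ring_scope.

Lemma traject_defect (x f : F) n :
  (count_mem f (traject A x n.+1))%:Z - (count_mem (A f) (traject A x n.+1))%:Z
  = (f == iter n A x)%:Z - (A f == x)%:Z.
Proof.
elim: n x => [|n IH] x; first by rewrite /= !addn0 (eq_sym x) (eq_sym x).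
move: (IH (A x)); rewrite -iterSr (inj_eq injA) [traject _ x _]trajectS.
move: (traject A (A x) n.+1) => s /=.
rewrite !PoszD (eq_sym x f) (eq_sym x (A f)).
set a := (f == x)%:Z; set b := (A f == x)%:Z; set d := (f == A _)%:Z.
set c1 := Posz (count_mem f s); set c2 := Posz (count_mem (A f) s).
by move=> E; apply/eqP; rewrite -subr_eq0; apply/eqP; lia.
Qed.

Definition chain_defect (f : F) : int :=
  \sum_(i < m) ((f == w (nx i))%:Z - (f == twin (w i))%:Z).

Lemma defect_hclass_chain (f : F) : defect (hclass chain) f = chain_defect f.
Proof.
have Posz_sum (G : nat -> nat) : (\sum_(i < m) G i)%N%:Z = \sum_(i < m) (G i)%:Z.
  exact: (big_morph Posz PoszD (erefl _)).
rewrite /defect /hclass !count_chain (Posz_sum (fun i => count_mem f (seg i))).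
rewrite (Posz_sum (fun i => count_mem (A f) (seg i))) -sumrB; apply: eq_bigr => i _.
by rewrite /seg traject_defect seg_end // /seg_start (inj_eq injA).
Qed.

Lemma chain_defect_twin (f : F) : chain_defect (twin f) = - chain_defect f.
Proof.
have twin_inj : injective (@twin V) := can_inj (twinK HV).
rewrite /chain_defect !sumrB.
rewrite (eq_bigr (fun i : 'I_m => (f == twin (w (nx i)))%:Z)); last first.
  by move=> i _; rewrite -{1}(twinK HV (w _)) (inj_eq twin_inj).
rewrite [X in _ - X](eq_bigr (fun i : 'I_m => (f == w i)%:Z)); last first.
  by move=> i _; rewrite (inj_eq twin_inj).
rewrite (sum_rot (fun k => (f == twin (w k))%:Z) m_gt0).
by rewrite -(sum_rot (fun k => (f == w k)%:Z) m_gt0) opprB.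
Qed.

Lemma chain_defect_out (f : F) :
  (forall i, (i < m)%N -> (f != w i) && (f != twin (w i))) -> chain_defect f = 0.
Proof.
move=> H; rewrite /chain_defect big1 // => i _.
have /andP [h1 _] := H _ (nx_lt i); have /andP [_ h2] := H _ (ltn_ord i).
by rewrite (negbTE h1) (negbTE h2).
Qed.

Lemma chain_defect_w0 : chain_defect (w 0) = 1.
Proof.
rewrite /chain_defect sumrB (sum_rot (fun k => (w 0 == w k)%:Z) m_gt0).
rewrite (bigD1 (Ordinal m_gt0)) //= eqxx big1 ?addr0; last first.
  move=> i ne; case: eqP => // E; exfalso; move: ne; rewrite (_ : i = Ordinal m_gt0) ?eqxx //.
  by apply: val_inj; apply: (w_distinct (ltn_ord i) m_gt0); rewrite -E connect0.
rewrite big1 ?subr0 // => i _; case: eqP => // E; exfalso.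
have mm : (m.-1 < m)%N by rewrite prednK.
have nm : nx m.-1 = 0%N by rewrite prednK // modnn.
have c := w_next mm; rewrite nm E in c.
have eij := w_distinct mm (ltn_ord i) c.
by have := w_new mm; rewrite nm E -eij eqxx.
Qed.

End SwitchCycle.

Lemma switch_chain (V : tri_data) (HV : veering_triangulation V) m (w : nat -> face V) :
  switch_cycle m w ->
  [/\ AB_chain (chain m w),
      forall f, defect (hclass (chain m w)) f = chain_defect m w f,
      forall f, chain_defect m w (twin f) = - chain_defect m w f,
      forall f, (forall i, (i < m)%N -> (f != w i) && (f != twin (w i))) -> chain_defect m w f = 0 &
      chain_defect m w (w 0%N) = 1]%R.
Proof.
case=> m_gt0 w_next w_new w_distinct; split.
- exact: chain_AB.
- exact: defect_hclass_chain.
- exact: chain_defect_twin.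
- exact: chain_defect_out.
- exact: chain_defect_w0.
Qed.

(* Iterating next_switch from a face of nonzero defect and stopping at the
   first AB-cycle met twice produces a switch cycle. *)
Section SwitchWalk.
Variable V : tri_data.
Hypothesis HV : veering_triangulation V.
Local Notation F := (face V).
Local Notation A := (@A V).
Variables (z : F -> int) (e0 : F).
Hypotheses (z_anti : twin_antisym z) (z_e0 : defect z e0 != 0).

Definition walk (k : nat) : F := iter k (next_switch z) e0.
Definition walk_cycle (k : nat) : F := froot A (twin (walk k)).

Lemma walk_defect k : defect z (walk k) != 0.
Proof. by elim: k => //= k IH; have [] := next_switchP HV z_anti IH. Qed.

Lemma walk_step k :
  fconnect A (twin (walk k)) (walk k.+1) /\ walk k.+1 != twin (walk k).
Proof. by have [] := next_switchP HV z_anti (walk_defect k). Qed.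

Lemma walk_cycleE a b :
  (walk_cycle a == walk_cycle b) = fconnect A (twin (walk a)) (twin (walk b)).
Proof. exact: fingraph.root_connect (A_fconnect_sym HV) _ _. Qed.

Variables (J K : nat).
Hypotheses (JK : J < K) (cycle_JK : walk_cycle J = walk_cycle K)
  (cycle_new : forall a b, J < a -> a < b -> b <= K -> walk_cycle a != walk_cycle b).

Lemma walk_wrap : walk J.+1 != twin (walk K).
Proof.
apply/eqP => E; have [] := ltngtP (K - J) 2 => [lt2|gt2|eq2].
- have KJ : K = J.+1 by lia.
  by rewrite KJ in E; move: (twin_neq HV (walk J.+1)); rewrite -E eqxx.
- have [conn _] := walk_step K.-1.
  have twinJ : twin (walk J.+1) = walk K by rewrite E (twinK HV).
  rewrite prednK ?(leq_ltn_trans _ JK) // -twinJ -walk_cycleE eq_sym in conn.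
  have J1K1 : J.+1 < K.-1 by lia.
  by have := cycle_new (ltnSn J) J1K1 (leq_pred K); rewrite conn.
- have [_] := walk_step J.+1; have -> : J.+2 = K by lia.
  by rewrite E (twinK HV) eqxx.
Qed.

Lemma walk_switch_cycle : switch_cycle (K - J) (fun i => walk (J.+1 + i)).
Proof.
have m_gt0 : 0 < K - J by rewrite subn_gt0.
have last_K : J.+1 + (K - J).-1 = K by lia.
have step i : fconnect A (twin (walk (J.+1 + i))) (walk (J.+1 + i.+1)) /\
    walk (J.+1 + i.+1) != twin (walk (J.+1 + i)).
  by rewrite addnS; exact: walk_step.
have around i : i < K - J -> i.+1 < K - J \/ (i = (K - J).-1 /\ i.+1 %% (K - J) = 0).
  move=> im; case: (ltnP i.+1 (K - J)) => [lt | ge]; [by left | right].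
  have iE : i = (K - J).-1 by lia.
  by rewrite {2}iE prednK // modnn.
split => //.
- move=> i /around [lt | [-> ->]]; first by rewrite modn_small //; case: (step i).
  rewrite last_K addn0; apply: connect_trans (proj1 (walk_step J)).
  by rewrite -walk_cycleE cycle_JK.
- move=> i /around [lt | [-> ->]]; first by rewrite modn_small //; case: (step i).
  by rewrite last_K addn0; exact: walk_wrap.
move=> i j im jm; rewrite -walk_cycleE => /eqP Eij.
have clash a b : J < a -> a < b -> b <= K -> walk_cycle a = walk_cycle b -> False.
  by move=> Ja ab bK Eab; move: (cycle_new Ja ab bK); rewrite Eab eqxx.
case: (ltngtP i j) => // [ij|ji]; exfalso.
  by apply: (clash (J.+1 + i) (J.+1 + j)) => //; lia.
by apply: (clash (J.+1 + j) (J.+1 + i)) => //; lia.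
Qed.

End SwitchWalk.

Lemma switch_cycle_exists (V : tri_data) (HV : veering_triangulation V) (z : face V -> int) :
  twin_antisym z -> forall e0, defect z e0 != 0 ->
  exists m w, switch_cycle m w /\ forall i, i < m -> defect z (w i) != 0.
Proof.
move=> z_anti e0 z_e0; have [J [K [JK cycle_JK cycle_new]]] := first_repeat (walk_cycle z e0).
exists (K - J), (fun i => walk z e0 (J.+1 + i)); split; last by move=> i _; exact: walk_defect.
exact: walk_switch_cycle.
Qed.

Local Open Scope ring_scope.

(* Induction on the size of the support of the defect: subtracting the
   right multiple of the chain of a switch cycle removes w 0 from the
   support without creating new support. *)
Lemma AB_expansion_support (V : tri_data) (HV : veering_triangulation V)
    (n : nat) (z : face V -> int) : twin_antisym z ->
  (#|[pred f | defect z f != 0]| <= n)%N -> exists l, AB_expansion l z.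
Proof.
elim: n z => [|n IH] z z_anti supp_n.
  apply: (AB_cycles_span HV) => f; apply/eqP/negPn/negP => zf.
  by move: supp_n; rewrite leqn0 => /eqP/card0_eq/(_ f); rewrite inE zf.
have [e0 z_e0 | z0] := pickP [pred f | defect z f != 0]; last first.
  by apply: (AB_cycles_span HV) => f; have /negbT := z0 f; rewrite negbK => /eqP.
have [m [w [w_switch w_defect]]] := switch_cycle_exists HV z_anti z_e0.
have [c_AB c_defect c_twin c_out c_w0] := switch_chain HV w_switch.
pose c := chain m w; pose a := defect z (w 0%N).
pose z' f := z f - a * hclass c f.
have defect_z' f : defect z' f = defect z f - a * chain_defect m w f.
  by rewrite -c_defect /defect /z'; ring.
have z'_anti : twin_antisym z'.
  by move=> f; rewrite !defect_z' z_anti c_twin; ring.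
have supp_sub f : defect z' f != 0 -> defect z f != 0.
  rewrite defect_z'; apply: contraNN => /eqP zf.
  rewrite zf c_out ?mulr0 ?subr0 // => i im; apply/andP; split.
    by apply: contraNneq (w_defect _ im) => <-; rewrite zf.
  by apply: contraNneq (w_defect _ im) => Ef; rewrite -oppr_eq0 -z_anti -Ef zf.
have w0_fixed : defect z' (w 0%N) = 0.
  by rewrite defect_z' c_w0 mulr1 subrr.
have [l [l_AB l_sum]] : exists l, AB_expansion l z'.
  apply: IH => //; rewrite -ltnS (leq_trans _ supp_n) // proper_card //.
  apply/properP; split; first by apply/subsetP => f; rewrite !inE; exact: supp_sub.
  have m_gt0 : (0 < m)%N by case: w_switch.
  by exists (w 0%N); rewrite !inE ?w0_fixed ?w_defect.
exists ((a, c) :: l); split.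
  by move=> x; rewrite inE => /orP [/eqP -> | /l_AB] //; left.
by move=> f; rewrite big_cons -l_sum /z' addrC subrK.
Qed.

Theorem mainTheorem18 (V : tri_data) (HV : veering_triangulation V)
    (z : face V -> int) (hz : is_H1 z) :
  exists l : seq (int * seq (face V)),
    (forall x, x \in l -> AB_chain x.2 \/ AB_cycle x.2) /\
    (forall f, z f = \sum_(x <- l) x.1 * hclass x.2 f).
Proof.
have z_anti : twin_antisym z := defect_twin HV hz.
have [l expansion] := AB_expansion_support HV z_anti (max_card _).
by exists l.
Qed.
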